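(* Let $L$ be a finite $\mathcal{L}$-lattice with $|L|\le n$. Then $L$ has the interpolation property iff every valid $a\le b$ with at most $n$ right variables has an interpolant, i.e. a formula $i$ whose variables are all intersection variables of $a,b$ such that $a\le i$ and $i\le b$ are valid.
   Context: A lattice-oriented signature $\mathcal{L}$ is a finite set of connectives. Each connective $c$ has an arity $n_c\in\mathbb{N}$ and a polarity $p_c:\{1,\dots,n_c\}\to\{-,+\}$. The signature contains binary connectives $\lor,\land,\to$ with $p_\lor(1)=p_\lor(2)=p_\land(1)=p_\land(2)=+$, $p_\to(1)=-$ and $p_\to(2)=+$; nullary connectives are truth constants. A finite $\mathcal{L}$-lattice is a finite set $L$ together with an $n_c$-ary operation $c^L$ on $L$ for each connective $c$, such that: - $(L,\lor^L,\land^L)$ is a lattice, with order $x\le y$ iff $x\land y=x$; its top element is denoted $1$; - $c^L$ is monotone in every argument $i$ with $p_c(i)=+$ and antitone in every argument $i$ with $p_c(i)=-$; - for all $a,b\in L$: $1\le a\to^L b$ iff $a\le b$. Formulas (words) are built from propositional variables using the connectives. A valuation assigns elements of $L$ to the variables and extends to all formulas via the operations $c^L$. For formulas $a,b$, ''$a\le b$ is valid'' means that the value of $a$ is $\le$ the value of $b$ under every valuation. For a valid $a\le b$, the variables occurring only in $a$ are the left variables, those occurring only in $b$ are the right variables, and those occurring in both are the intersection variables. $L$ has the interpolation property iff for all formulas $a,b$ with $a\le b$ valid there is a formula $i$ whose variables are all intersection variables of $a,b$ such that $a\le i$ and $i\le b$ are valid. If there are no intersection variables, $i$ must be a closed formula.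 *)

From mathcomp Require Import all_boot.
Set Implicit Arguments. Unset Strict Implicit. Unset Printing Implicit Defensive.

(* A lattice-oriented signature: a finite set of connectives with arities and
   polarities (pol c i = true means polarity + for argument i < arity c),
   containing three distinct binary connectives or, and, imp with the
   prescribed polarities. *)
Record Lsig := {
  conn : finType;
  arity : conn -> nat;
  pol : conn -> nat -> bool;
  c_or : conn; c_and : conn; c_imp : conn;
  ar_or : arity c_or = 2; ar_and : arity c_and = 2; ar_imp : arity c_imp = 2;
  pol_or : pol c_or 0 = true /\ pol c_or 1 = true;
  pol_and : pol c_and 0 = true /\ pol c_and 1 = true;
  pol_imp : pol c_imp 0 = false /\ pol c_imp 1 = true;
  dist_or_and : c_or <> c_and; dist_or_imp : c_or <> c_imp;
  dist_and_imp : c_and <> c_imp }.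

Inductive form (S : Lsig) : Type :=
| Var : nat -> form S
| Node (c : conn S) : ('I_(arity c) -> form S) -> form S.

Fixpoint vars (S : Lsig) (a : form S) : seq nat :=
  match a with
  | Var x => [:: x]
  | Node c f => flatten [seq vars (f i) | i <- enum 'I_(arity c)]
  end.

Definition interp (S : Lsig) (L : Type) := forall c : conn S, ('I_(arity c) -> L) -> L.

Definition bin (S : Lsig) (L : Type) (op : interp S L) (c : conn S) (x y : L) : L :=
  op c (fun i : 'I_(arity c) => if nat_of_ord i == 0 then x else y).

Definition ljoin S L (op : interp S L) := bin op (c_or S).
Definition lmeet S L (op : interp S L) := bin op (c_and S).
Definition limp S L (op : interp S L) := bin op (c_imp S).

Definition lle S L (op : interp S L) (x y : L) : Prop := lmeet op x y = x.

Definition is_lattice S L (op : interp S L) : Prop :=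
  let j := ljoin op in let m := lmeet op in
  [/\ (forall x y, j x y = j y x), (forall x y, m x y = m y x),
      (forall x y z, j x (j y z) = j (j x y) z),
      (forall x y z, m x (m y z) = m (m x y) z) &
      ((forall x y, j x (m x y) = x) /\ (forall x y, m x (j x y) = x))].

Definition respects_polarity S L (op : interp S L) : Prop :=
  forall (c : conn S) (i : 'I_(arity c)) (f g : 'I_(arity c) -> L),
    (forall j, j != i -> f j = g j) ->
    lle op (f i) (g i) ->
    (if pol c i then lle op (op c f) (op c g) else lle op (op c g) (op c f)).

Definition is_Llattice S (L : finType) (op : interp S L) : Prop :=
  [/\ is_lattice op, respects_polarity op &
      exists top : L, (forall x, lle op x top) /\
        (forall a b, lle op top (limp op a b) <-> lle op a b)].

Fixpoint eval S (L : Type) (op : interp S L) (v : nat -> L) (a : form S) : L :=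
  match a with
  | Var x => v x
  | Node c f => op c (fun i => eval op v (f i))
  end.

Definition valid S L (op : interp S L) (a b : form S) : Prop :=
  forall v : nat -> L, lle op (eval op v a) (eval op v b).

Definition rightvars S (a b : form S) : seq nat :=
  undup [seq x <- vars b | x \notin vars a].

Definition interpolant S L (op : interp S L) (a b i : form S) : Prop :=
  [/\ (forall x, x \in vars i -> (x \in vars a) && (x \in vars b)),
      valid op a i & valid op i b].

Definition interpolation_property S L (op : interp S L) : Prop :=
  forall a b : form S, valid op a b -> exists i, interpolant op a b i.

From Stdlib Require Import FunctionalExtensionality.
From mathcomp Require Import all_boot.
Set Implicit Arguments. Unset Strict Implicit. Unset Printing Implicit Defensive.

(* Only the values of the right variables of [b] matter, and each ranges over
   the finite set [L].  Hence [a <= b] is equivalent to [a <= B], where [B] is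
   the meet of all copies of [b] obtained by renaming every right variable [x]
   to a fresh variable [c_l] named after a value [l = g x], for every choice
   function [g]: a valuation of [b] is recovered by valuing each [c_l] as [l].
   The formula [B] has at most [|L|] right variables and shares with [a] only
   variables of [b], so an interpolant of [a <= B] is one of [a <= b]. *)

Fixpoint ren (S : Lsig) (s : nat -> nat) (a : form S) : form S :=
  match a with
  | Var x => Var S (s x)
  | Node c f => Node (fun i => ren s (f i))
  end.

Lemma eval_ren S L (op : interp S L) v s (a : form S) :
  eval op v (ren s a) = eval op (v \o s) a.
Proof.
elim: a => [x|c f IH] //=; congr (op c).
by apply: functional_extensionality => i; exact: IH.
Qed.

Lemma vars_ren S s (a : form S) : vars (ren s a) = map s (vars a).
Proof.
elim: a => [x|c f IH] //=; rewrite map_flatten -map_comp.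
by congr flatten; apply: eq_map => i; exact: IH.
Qed.

Lemma eq_eval S L (op : interp S L) v w (a : form S) :
  {in vars a, v =1 w} -> eval op v a = eval op w a.
Proof.
elim: a => [x|c f IH] /= vw; first by apply: vw; rewrite inE.
congr (op c); apply: functional_extensionality => i; apply: IH => x xfi.
by apply: vw; apply/flatten_mapP; exists i; rewrite ?mem_enum.
Qed.

Definition fmeet S (x y : form S) : form S :=
  Node (fun i : 'I_(arity (c_and S)) => if nat_of_ord i == 0 then x else y).

Lemma eval_fmeet S L (op : interp S L) v (x y : form S) :
  eval op v (fmeet x y) = lmeet op (eval op v x) (eval op v y).
Proof.
rewrite /lmeet /bin /=; congr (op _).
by apply: functional_extensionality => i; case: (nat_of_ord i == 0).
Qed.

Lemma vars_fmeet S (x y : form S) z :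
  z \in vars (fmeet x y) -> (z \in vars x) || (z \in vars y).
Proof. by case/flatten_mapP => i _; case: (nat_of_ord i == 0) => ->; rewrite ?orbT. Qed.

Definition bigfmeet S (T : Type) (a : form S) (F : T -> form S) (r : seq T) :=
  foldr (fun t m => fmeet (F t) m) a r.

Lemma bigfmeet_cons S (T : Type) (a : form S) (F : T -> form S) t r :
  bigfmeet a F (t :: r) = fmeet (F t) (bigfmeet a F r).
Proof. by []. Qed.

Lemma vars_bigfmeet S (T : eqType) (a : form S) (F : T -> form S) r z :
  z \in vars (bigfmeet a F r) ->
  z \in vars a \/ exists2 t, t \in r & z \in vars (F t).
Proof.
elim: r => [|t r IH]; first by left.
rewrite bigfmeet_cons => /vars_fmeet/orP [zFt|/IH [za|[u ur zFu]]].
- by right; exists t; rewrite ?inE ?eqxx.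
- by left.
- by right; exists u; rewrite ?inE ?ur ?orbT.
Qed.

Section LatticeFacts.
Variables (S : Lsig) (L : Type) (op : interp S L).
Hypothesis op_lattice : is_lattice op.

Lemma lmeet_id x : lmeet op x x = x.
Proof. by case: op_lattice => _ _ _ _ [joinK meetK]; rewrite -{2}(joinK x x) meetK. Qed.

Lemma lle_trans x y z : lle op x y -> lle op y z -> lle op x z.
Proof. by case: op_lattice => _ _ _ meetA _; rewrite /lle => <- yz; rewrite -meetA yz. Qed.

Lemma lle_meetl x y : lle op (lmeet op x y) x.
Proof.
case: op_lattice => _ meetC _ meetA _.
by rewrite /lle (meetC _ x) meetA lmeet_id.
Qed.

Lemma lle_meetr x y : lle op (lmeet op x y) y.
Proof. by case: op_lattice => _ _ _ meetA _; rewrite /lle -meetA lmeet_id. Qed.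

Lemma lle_meet z x y : lle op z x -> lle op z y -> lle op z (lmeet op x y).
Proof. by case: op_lattice => _ _ _ meetA _; rewrite /lle => zx zy; rewrite meetA zx. Qed.

Section BigMeet.
Variables (T : eqType) (a : form S) (F : T -> form S) (r : seq T) (v : nat -> L).

Lemma lle_bigfmeet t : t \in r -> lle op (eval op v (bigfmeet a F r)) (eval op v (F t)).
Proof.
elim: r => [|u s IH] //; rewrite inE bigfmeet_cons eval_fmeet => /predU1P [->|ts].
  exact: lle_meetl.
by apply: lle_trans (IH ts); exact: lle_meetr.
Qed.

Lemma bigfmeet_glb z :
  lle op z (eval op v a) -> (forall t, t \in r -> lle op z (eval op v (F t))) ->
  lle op z (eval op v (bigfmeet a F r)).
Proof.
elim: r => [|u s IH] // za zF; rewrite bigfmeet_cons eval_fmeet.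
apply: lle_meet; first by apply: zF; rewrite inE eqxx.
by apply: IH => // t ts; apply: zF; rewrite inE ts orbT.
Qed.

End BigMeet.
End LatticeFacts.

Section Collapse.
Variables (S : Lsig) (L : finType) (op : interp S L).
Hypothesis op_lattice : is_lattice op.
Variables (l0 : L) (a b : form S).

Let N := (\max_(x <- vars a ++ vars b) x).+1.

Lemma vars_lt_bound x : (x \in vars a) || (x \in vars b) -> x < N.
Proof. by move=> xab; rewrite ltnS (leq_bigmax_seq (P := xpredT)) // mem_cat. Qed.

(* Right variable [x] becomes [N + k], where [k] is the rank of the value [g]
   assigns to [x]; variables at least [N] occur neither in [a] nor in [b]. *)
Definition code_right (g : N.-tuple L) x :=
  if x \in vars a then x else N + enum_rank (nth l0 g x).

Definition collapse : form S :=
  bigfmeet (ren (code_right [tuple of nseq N l0]) b)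
    (fun g => ren (code_right g) b) (enum {: N.-tuple L}).

Lemma vars_collapse z :
  z \in vars collapse -> exists g, z \in map (code_right g) (vars b).
Proof.
by case/vars_bigfmeet => [|[g _]]; rewrite vars_ren => zb; eexists; exact: zb.
Qed.

Lemma collapse_inter z : z \in vars collapse -> z \in vars a -> z \in vars b.
Proof.
case/vars_collapse=> g /mapP [y yb ->]; rewrite /code_right.
case: ifP => // _ codea.
suff: N + enum_rank (nth l0 g y) < N by rewrite ltnNge leq_addr.
by apply: vars_lt_bound; rewrite codea.
Qed.

Lemma size_rightvars_collapse : size (rightvars a collapse) <= #|L|.
Proof.
rewrite -[#|L|](size_iota N); apply: uniq_leq_size; first exact: undup_uniq.
move=> z; rewrite mem_undup mem_filter => /andP [za /vars_collapse [g /mapP [y _ zy]]].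
move: za; rewrite {z}zy /code_right; case: ifP => [-> // | _ _].
by rewrite mem_iota leq_addr ltn_add2l ltn_ord.
Qed.

Lemma valid_collapse : valid op a b -> valid op a collapse.
Proof.
move=> ab v.
have ab_code g : lle op (eval op v a) (eval op (v \o code_right g) b).
  by rewrite (@eq_eval _ _ _ v (v \o code_right g)) // => x xa; rewrite /= /code_right xa.
by apply: bigfmeet_glb => // [|g _]; rewrite eval_ren.
Qed.

Lemma valid_collapse_le i :
  {subset vars i <= vars a} -> valid op i collapse -> valid op i b.
Proof.
move=> ia ic v.
pose w x := if N <= x then nth l0 (enum L) (x - N) else v x.
have vg : size (map v (iota 0 N)) == N by rewrite size_map size_iota.
have eval_i : eval op v i = eval op w i.
  by apply: eq_eval => x /ia xa; rewrite /w leqNgt vars_lt_bound ?xa.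
have eval_b : eval op v b = eval op w (ren (code_right (Tuple vg)) b).
  rewrite eval_ren; apply: eq_eval => x xb; rewrite /= /code_right.
  have xN : x < N by rewrite vars_lt_bound ?xb ?orbT.
  case: ifP => _; first by rewrite /w leqNgt xN.
  rewrite /w leq_addr addKn nth_enum_rank.
  change (v x = nth l0 (map v (iota 0 N)) x).
  by rewrite (nth_map 0) ?size_iota // nth_iota.
rewrite eval_i eval_b; apply: lle_trans (ic w) _ => //.
by apply: lle_bigfmeet => //; rewrite mem_enum.
Qed.

Lemma interpolant_collapse i : interpolant op a collapse i -> interpolant op a b i.
Proof.
case=> iac ai ic; split=> //.
- move=> x xi; have /andP [xa xc] := iac x xi.
  by rewrite xa collapse_inter.
- by apply: valid_collapse_le => // x /iac /andP [].
Qed.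

End Collapse.

Theorem lemma2 (S : Lsig) (L : finType) (op : interp S L) (n : nat) :
  is_Llattice op -> #|L| <= n ->
  (interpolation_property op <->
   forall a b : form S, valid op a b -> size (rightvars a b) <= n ->
     exists i, interpolant op a b i).
Proof.
move=> [op_lattice _ [top _]] Ln; split=> [ip a b ab _ | small a b ab].
  exact: ip.
have [|i ai] := small a (collapse top a b) (valid_collapse op_lattice top ab).
  by apply: leq_trans Ln; exact: size_rightvars_collapse.
by exists i; exact: interpolant_collapse op_lattice _ _ _ _ ai.
Qed.
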